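(* Let $M$ be a generalized modularity matrix on $V$ with induced modularity function $Q$, and let $S_1,\dots,S_k$ ($k\ge1$) be pairwise disjoint nonempty subsets of $V$ such that $Q(S_i)>0$ for all $i$ and $Q(S_i,S_j)<0$ for all $i\neq j$. If there exist positive numbers $\alpha_1,\dots,\alpha_k$ such that $$\alpha_iQ(S_i)>\sum_{j\ne i}\alpha_j\,|Q(S_i,S_j)|\qquad\text{for all } i=1,\dots,k,$$ then $M$ has at least $k$ positive eigenvalues (counted with multiplicity).
   Context: Let $V=\{1,\dots,n\}$ and let $A\in\mathbb{R}^{n\times n}$ be the adjacency matrix of an undirected connected weighted graph on $V$, possibly with loops, i.e. $A$ is symmetric, entrywise nonnegative and irreducible. A generalized modularity matrix is any matrix $M=A+\Delta-\sigma vv^{\mathsf T}$ where $\Delta$ is a real diagonal matrix, $v\ne0$ is entrywise nonnegative, and $\sigma>0$. For $S\subseteq V$, $\mathbb{1}_S$ is its characteristic vector; $Q(S)=\mathbb{1}_S^{\mathsf T}M\mathbb{1}_S$, and for disjoint $S,T$, $Q(S,T)=\mathbb{1}_S^{\mathsf T}M\mathbb{1}_T$. *)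

(* Reals are modelled by an arbitrary real closed field R. *)
From HB Require Import structures.
From mathcomp Require Import all_boot all_order all_algebra.
Set Implicit Arguments. Unset Strict Implicit. Unset Printing Implicit Defensive.
Import Order.TTheory GRing.Theory Num.Theory.
Local Open Scope ring_scope.

(* Adjacency matrix of an undirected connected weighted graph (loops allowed):
   symmetric, entrywise nonnegative, irreducible. *)
Definition irreducible_mx (R : numDomainType) (n : nat) (A : 'M[R]_n) : Prop :=
  forall S : {set 'I_n}, S != set0 -> S != setT ->
    exists i j, [/\ i \in S, j \notin S & A i j != 0].

Definition adjacency_mx (R : numDomainType) (n : nat) (A : 'M[R]_n) : Prop :=
  [/\ A^T = A, (forall i j, 0 <= A i j) & irreducible_mx A].

Definition charvec (R : numDomainType) (n : nat) (S : {set 'I_n}) : 'cV[R]_n :=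
  \col_i (i \in S)%:R.

Definition Qmod2 (R : numDomainType) (n : nat) (M : 'M[R]_n) (S T : {set 'I_n}) : R :=
  ((charvec R S)^T *m M *m charvec R T) 0 0.

Definition Qmod (R : numDomainType) (n : nat) (M : 'M[R]_n) (S : {set 'I_n}) : R :=
  Qmod2 M S S.

(* M has at least k positive eigenvalues counted with (algebraic) multiplicity:
   there are k positive reals (with repetition) whose linear factors, taken
   together, divide the characteristic polynomial of M. *)
Definition at_least_pos_eigenvalues (R : numDomainType) (n : nat) (M : 'M[R]_n)
    (k : nat) : Prop :=
  exists s : seq R, [/\ size s = k, all (fun x => 0 < x) s &
    (\prod_(x <- s) ('X - x%:P)) %| char_poly M].

(* Let E be the k x n matrix whose rows are the indicator vectors of the S_i,
   so that B := E M E^T has entries Q(S_i, S_j).  Bounding each cross term of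
   c B c^T by AM-GM gives
     c B c^T >= sum_i c_i^2 / alpha_i
                      * (alpha_i Q(S_i) - sum_(j <> i) alpha_j |Q(S_i, S_j)|),
   so weighted diagonal dominance makes B positive definite.  If M had fewer
   than k positive eigenvalues, some nonzero combination c E would be
   orthogonal to every eigenvector of M with a positive eigenvalue, forcing
   c B c^T <= 0.  M is diagonalised by a unitary matrix over R[i], where the
   hermitian form of a real symmetric B at c is the sum of its real forms at
   Re c and Im c. *)

From mathcomp Require Import all_boot all_order all_algebra.
From mathcomp Require Import complex sesquilinear spectral.
From mathcomp Require Import ring lra.
Set Implicit Arguments. Unset Strict Implicit. Unset Printing Implicit Defensive.
Import Order.TTheory GRing.Theory Num.Theory Num.Def.
Local Open Scope ring_scope.
Local Open Scope sesquilinear_scope.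

Definition posdefmx (R : numDomainType) (k : nat) (B : 'M[R]_k) : Prop :=
  forall c : 'rV[R]_k, c != 0 -> 0 < (c *m B *m c^T) 0 0.

Lemma mxE_qform (R : comNzRingType) (k : nat) (a b : 'rV[R]_k) (B : 'M[R]_k) :
  (a *m B *m b^T) 0 0 = \sum_i \sum_j a 0 i * B i j * b 0 j.
Proof.
rewrite !mxE; under eq_bigr do rewrite !mxE big_distrl /=.
by rewrite exchange_big.
Qed.

(* AM-GM on [x / ai] and [y / aj]. *)
Lemma weighted_cross_term_ge (R : realFieldType) (ai aj x y b : R) :
  0 < ai -> 0 < aj ->
  - (`|b| * aj * x ^+ 2 / ai + `|b| * ai * y ^+ 2 / aj) / 2 <= x * b * y.
Proof.
move=> ai_gt0 aj_gt0; rewrite -subr_ge0.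
have aij_gt0 : 0 < ai * aj by rewrite mulr_gt0.
have [b_lt0 | b_ge0] := ltP b 0.
  rewrite ltr0_norm //.
  have -> : x * b * y - - (- b * aj * x ^+ 2 / ai + - b * ai * y ^+ 2 / aj) / 2
      = (ai * aj) * (- b) * (x / ai - y / aj) ^+ 2 / 2.
    by field; rewrite ?gt_eqF.
  by rewrite divr_ge0 // mulr_ge0 ?sqr_ge0 // mulr_ge0 ?oppr_ge0 ?ltW.
rewrite ger0_norm //.
have -> : x * b * y - - (b * aj * x ^+ 2 / ai + b * ai * y ^+ 2 / aj) / 2
    = (ai * aj) * b * (x / ai + y / aj) ^+ 2 / 2.
  by field; rewrite ?gt_eqF.
by rewrite divr_ge0 // mulr_ge0 ?sqr_ge0 // mulr_ge0 // ltW.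
Qed.

Section WeightedDominance.

Variables (R : realFieldType) (k : nat) (B : 'M[R]_k) (alpha : 'I_k -> R).
Hypothesis B_sym : B^T = B.
Hypothesis alpha_gt0 : forall i, 0 < alpha i.

Let slack i := alpha i * B i i - \sum_(j < k | j != i) alpha j * `|B i j|.

Lemma qform_ge_weighted_slack (a : 'rV[R]_k) :
  \sum_i a 0 i ^+ 2 / alpha i * slack i <= (a *m B *m a^T) 0 0.
Proof.
have B_symE i j : B j i = B i j by rewrite -[in RHS]B_sym mxE.
pose h i j := `|B i j| * alpha j * a 0 i ^+ 2 / alpha i.
have row_ge i : a 0 i ^+ 2 * B i i - \sum_(j < k | j != i) (h i j + h j i) / 2
    <= \sum_j a 0 i * B i j * a 0 j.
  rewrite [X in _ <= X](bigD1 i) //= [_ * B i i * _]mulrAC -expr2 lerD2l -sumrN.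
  apply: ler_sum => j _; rewrite /h (B_symE i j) -mulNr.
  exact: weighted_cross_term_ge.
have h_swap : \sum_i \sum_(j < k | j != i) h j i = \sum_i \sum_(j < k | j != i) h i j.
  rewrite (exchange_big_dep xpredT) //=.
  by apply: eq_bigr => i _; apply: eq_bigl => j; rewrite eq_sym.
have slackE i : a 0 i ^+ 2 / alpha i * slack i
    = a 0 i ^+ 2 * B i i - \sum_(j < k | j != i) h i j.
  rewrite /slack mulrBr mulr_sumr; congr (_ - _); first by field; rewrite gt_eqF.
  by apply: eq_bigr => j _; rewrite /h; field; rewrite gt_eqF.
rewrite mxE_qform; apply: le_trans (ler_sum _ (fun i _ => row_ge i)).
under [X in _ <= X]eq_bigr do rewrite -mulr_suml big_split /=.
rewrite sumrB -mulr_suml big_split /= h_swap.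
have -> : forall x : R, (x + x) / 2 = x by move=> x; lra.
by rewrite -sumrB; under eq_bigr do rewrite slackE.
Qed.

Lemma weighted_dominant_posdefmx : (forall i, 0 < slack i) -> posdefmx B.
Proof.
move=> slack_gt0 a a_neq0.
have [i ai_neq0] : exists i, a 0 i != 0.
  apply/existsP; apply: contraR a_neq0; rewrite negb_exists => /forallP a0.
  by apply/eqP/rowP => i; rewrite mxE; apply/eqP/negbNE/a0.
have term_ge0 j : 0 <= a 0 j ^+ 2 / alpha j * slack j.
  by rewrite mulr_ge0 ?divr_ge0 ?sqr_ge0 ?ltW.
apply: lt_le_trans (qform_ge_weighted_slack a); rewrite (bigD1 i) //=.
apply: ltr_pwDl; last by apply: sumr_ge0 => j _.
by rewrite mulr_gt0 ?divr_gt0 ?exprn_even_gt0.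
Qed.

End WeightedDominance.

Lemma posdefmx_qform_ge0 (R : numDomainType) (k : nat) (B : 'M[R]_k) (c : 'rV[R]_k) :
  posdefmx B -> 0 <= (c *m B *m c^T) 0 0.
Proof.
move=> B_pd; have [->|c_neq0] := eqVneq c 0; last by rewrite ltW ?B_pd.
by rewrite !mul0mx mxE.
Qed.

Lemma conjC_real_complex (R : rcfType) (r : R) :
  conjC (real_complex R r) = real_complex R r.
Proof. exact: conjc_real. Qed.

Section ComplexForm.

Local Open Scope complex_scope.

Variables (R : rcfType) (k : nat) (B : 'M[R]_k).
Hypothesis B_sym : B^T = B.

(* The imaginary part [v B u - u B v] of the form vanishes by symmetry. *)
Lemma hermform_realsym (c : 'rV[R[i]]_k) :
  (c *m map_mx (real_complex R) B *m c^t*) 0 0 =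
  ((map_mx (@complex.Re R) c *m B *m (map_mx (@complex.Re R) c)^T) 0 0
   + (map_mx (@complex.Im R) c *m B *m (map_mx (@complex.Im R) c)^T) 0 0)%:C.
Proof.
set u := map_mx _ c; set v := map_mx _ c.
have cE j : c 0 j = (u 0 j)%:C + 'i%R * (v 0 j)%:C.
  by rewrite !mxE -complexiE; apply: complexE.
have B_symE i j : B j i = B i j by rewrite -[in RHS]B_sym mxE.
clearbody u v.
have entryE i j : c 0 i * map_mx (real_complex R) B i j * map_mx conjC c 0 j =
    (u 0 i * B i j * u 0 j + v 0 i * B i j * v 0 j)%:C
    + 'i%R * (B i j * (v 0 i * u 0 j - u 0 i * v 0 j))%:C.
  rewrite !mxE cE cE rmorphD rmorphM /= !conjC_real_complex conjCi mulNr.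
  rewrite !(rmorphD, rmorphB, rmorphN, rmorphM) /=.
  set I := 'i%R; have I_sqr : I * I = -1 by rewrite -expr2 sqrCi.
  transitivity ((u 0 i)%:C * (B i j)%:C * (u 0 j)%:C
    + (v 0 i)%:C * (B i j)%:C * (v 0 j)%:C
    + I * ((B i j)%:C * ((v 0 i)%:C * (u 0 j)%:C - (u 0 i)%:C * (v 0 j)%:C))
    - (B i j)%:C * (v 0 i)%:C * (v 0 j)%:C * (I * I + 1)); first by ring.
  by rewrite I_sqr addNr mulr0 subr0.
have swap : \sum_i \sum_j B i j * (u 0 i * v 0 j) = \sum_i \sum_j B i j * (v 0 i * u 0 j).
  rewrite exchange_big; apply: eq_bigr => i _; apply: eq_bigr => j _.
  by rewrite B_symE [u 0 j * _]mulrC.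
have cross0 : \sum_i \sum_j B i j * (v 0 i * u 0 j - u 0 i * v 0 j) = 0.
  under eq_bigr do (under eq_bigr do rewrite mulrBr; rewrite sumrB).
  by rewrite sumrB swap subrr.
transitivity (((u *m B *m u^T) 0 0 + (v *m B *m v^T) 0 0)%:C
  + 'i%R * (\sum_i \sum_j B i j * (v 0 i * u 0 j - u 0 i * v 0 j))%:C); last first.
  by rewrite cross0 rmorph0 mulr0 addr0.
rewrite -map_trmx !mxE_qform -big_split /= !rmorph_sum mulr_sumr -big_split /=.
apply: eq_bigr => i _; rewrite -big_split /= !rmorph_sum mulr_sumr -big_split /=.
by apply: eq_bigr => j _; rewrite entryE.
Qed.

Lemma posdefmx_hermform (c : 'rV[R[i]]_k) : posdefmx B -> c != 0 ->
  0 < (c *m map_mx (real_complex R) B *m c^t*) 0 0.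
Proof.
move=> B_pd c_neq0; rewrite hermform_realsym -(rmorph0 (real_complex R)) ltcR.
set u := map_mx _ c; set v := map_mx _ c.
have u_or_v_neq0 : (u != 0) || (v != 0).
  apply: contraR c_neq0; rewrite negb_or !negbK => /andP[/eqP u0 /eqP v0].
  apply/eqP/rowP => j.
  move: (congr1 (fun m : 'rV[R]_k => m 0 j) u0) (congr1 (fun m : 'rV[R]_k => m 0 j) v0).
  rewrite !mxE => Re_cj Im_cj.
  by rewrite [c 0 j]complexE Re_cj Im_cj mulr0 addr0.
clearbody u v.
move: (posdefmx_qform_ge0 u B_pd) (posdefmx_qform_ge0 v B_pd).
by case/orP: u_or_v_neq0 => /B_pd; lra.
Qed.

End ComplexForm.

Lemma char_poly_similar (F : fieldType) (n : nat) (P D : 'M[F]_n) :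
  P \in unitmx -> char_poly (invmx P *m D *m P) = char_poly D.
Proof.
move=> P_unit; rewrite /char_poly /char_poly_mx.
set Q := map_mx polyC P; set Qi := map_mx polyC (invmx P).
have QiQ : Qi *m Q = 1%:M by rewrite -map_mxM mulVmx // map_mx1.
have -> : 'X%:M - map_mx polyC (invmx P *m D *m P) = Qi *m ('X%:M - map_mx polyC D) *m Q.
  rewrite !map_mxM mulmxBr mulmxBl -!mulmxA; congr (_ - _).
  by rewrite mul_scalar_mx -scalemxAr QiQ scalemx1.
by rewrite !det_mulmx mulrC mulrA -det_mulmx (mulmx1C QiQ) det1 mul1r.
Qed.

Section RealSymmetricSpectrum.

Variables (R : rcfType) (n : nat) (M : 'M[R]_n).
Hypothesis M_sym : M^T = M.

Let MC := map_mx (real_complex R) M.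
Let P := spectralmx MC.
Let D := spectral_diag MC.

Let MC_herm : MC \is hermsymmx.
Proof.
apply/is_hermitianmxP; rewrite expr0 scale1r; apply/matrixP => i j.
by rewrite !mxE conjC_real_complex -[in LHS]M_sym mxE.
Qed.

Let P_unitary : P \is unitarymx. Proof. exact: spectral_unitarymx. Qed.

Let MC_diag : MC = P^t* *m diag_mx D *m P.
Proof. by rewrite -invmx_unitary //; apply/orthomx_spectralP/hermitian_normalmx. Qed.

Let D_real j : D 0 j \is Num.real.
Proof. by move: (hermitian_spectral_diag_real MC_herm) => /mxOverP; apply. Qed.

Let positive := [seq j <- index_enum 'I_n | 0 < D 0 j].

Lemma hermform_diag_le0 (y : 'rV[R[i]]_n) :
  (forall j, 0 < D 0 j -> y 0 j = 0) -> (y *m diag_mx D *m y^t*) 0 0 <= 0.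
Proof.
move=> y0; rewrite mul_mx_diag mxE; apply: sumr_le0 => j _; rewrite !mxE.
have [Dj_gt0|Dj_le0] := boolP (0 < D 0 j); first by rewrite y0 // !mul0r.
rewrite mulrAC mulr_ge0_le0 ?mul_conjC_ge0 //.
by rewrite real_leNgt ?real0 ?D_real.
Qed.

Lemma posdef_compression_size_positive (k : nat) (E : 'M[R]_(k, n)) :
  posdefmx (E *m M *m E^T) -> (k <= size positive)%N.
Proof.
move=> EME_pd; rewrite leqNgt; apply/negP => small.
pose t := in_tuple positive.
pose Sel : 'M[R[i]]_(n, size positive) := \matrix_(j, l) (j == tnth t l)%:R.
pose F := map_mx (real_complex R) E *m P^t* *m Sel.
have : ~~ row_free F by rewrite /row_free neq_ltn (leq_ltn_trans (rank_leq_col F)).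
rewrite -kermx_eq0 => /rowV0Pn [c /sub_kermxP cF c_neq0].
pose x := c *m map_mx (real_complex R) E; pose y := x *m P^t*.
have y0 j : 0 < D 0 j -> y 0 j = 0.
  move=> Dj_gt0; have /tnthP [l ->] : j \in t by rewrite mem_filter Dj_gt0 mem_index_enum.
  have ySel : y *m Sel = c *m F by rewrite /y /x /F !mulmxA.
  have := congr1 (fun X : 'M[R[i]]_(1, size positive) => X 0 l) ySel.
  rewrite cF mxE [X in _ = X]mxE => <-; rewrite (bigD1 (tnth t l)) //= big1 => [|j' ne].
    by rewrite !mxE eqxx mulr1 addr0.
  by rewrite !mxE (negbTE ne) mulr0.
have xMx_le0 : (x *m MC *m x^t*) 0 0 <= 0.
  suff -> : x *m MC *m x^t* = y *m diag_mx D *m y^t* by exact: hermform_diag_le0.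
  have yt : y^t* = P *m x^t* by rewrite /y trmx_mul map_mxM trmxCK.
  by rewrite yt MC_diag /y !mulmxA.
have xMx_gt0 : 0 < (x *m MC *m x^t*) 0 0.
  have EME_sym : (E *m M *m E^T)^T = E *m M *m E^T.
    by rewrite !trmx_mul trmxK M_sym mulmxA.
  suff -> : x *m MC *m x^t* = c *m map_mx (real_complex R) (E *m M *m E^T) *m c^t*.
    exact: posdefmx_hermform.
  have Et : (map_mx (real_complex R) E)^t* = map_mx (real_complex R) E^T.
    by apply/matrixP => i j; rewrite !mxE conjC_real_complex.
  by rewrite /x trmx_mul map_mxM Et !map_mxM !mulmxA.
by move: (lt_le_trans xMx_gt0 xMx_le0); rewrite ltxx.
Qed.

Lemma char_poly_realsym : char_poly MC = \prod_j ('X - (D 0 j)%:P).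
Proof.
rewrite MC_diag -invmx_unitary // char_poly_similar ?spectral_unit //.
rewrite char_poly_trig ?diag_mx_is_trig //.
by apply: eq_bigr => j _; rewrite mxE eqxx mulr1n.
Qed.

Lemma posdef_compression_pos_eigenvalues (k : nat) (E : 'M[R]_(k, n)) :
  posdefmx (E *m M *m E^T) -> at_least_pos_eigenvalues M k.
Proof.
move=> /posdef_compression_size_positive k_le.
exists [seq complex.Re (D 0 j) | j <- take k positive]; split.
- by rewrite size_map size_takel.
- apply/allP => _ /mapP [j /mem_take + ->]; rewrite mem_filter => /andP [Dj_gt0 _].
  by rewrite -ltcR (RRe_real (D_real j)) rmorph0.
rewrite -(dvdp_map (real_complex R)) map_char_poly char_poly_realsym rmorph_prod big_map.
under eq_bigr => j _ do rewrite /= map_polyXsubC /= (RRe_real (D_real j)).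
rewrite [X in _ %| X](bigID (fun j => 0 < D 0 j)) /=; apply: dvdp_trans (dvdp_mulIl _ _).
rewrite -[X in _ %| X]big_filter -/positive.
rewrite -[in X in _ %| X](cat_take_drop k positive) big_cat /=.
exact: dvdp_mulIl.
Qed.

End RealSymmetricSpectrum.

Definition charmx (R : numDomainType) (k n : nat) (S : 'I_k -> {set 'I_n}) :
  'M[R]_(k, n) :=
  \matrix_(i, j) (j \in S i)%:R.

Lemma charmx_compressionE (R : numDomainType) (k n : nat) (M : 'M[R]_n)
    (S : 'I_k -> {set 'I_n}) i j :
  (charmx R S *m M *m (charmx R S)^T) i j = Qmod2 M (S i) (S j).
Proof.
rewrite /Qmod2 !mxE; apply: eq_bigr => b _; rewrite !mxE; congr (_ * _).
by apply: eq_bigr => a _; rewrite !mxE.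
Qed.

Theorem theorem6p2 (R : rcfType) (n : nat) (A : 'M[R]_n) (d : 'rV[R]_n)
    (v : 'cV[R]_n) (sigma : R) (k : nat) (S : 'I_k -> {set 'I_n})
    (alpha : 'I_k -> R) :
  adjacency_mx A ->
  v != 0 -> (forall i, 0 <= v i 0) -> 0 < sigma ->
  (0 < k)%N ->
  (forall i j, i != j -> [disjoint S i & S j]) ->
  (forall i, S i != set0) ->
  (forall i, 0 < Qmod (A + diag_mx d - sigma *: (v *m v^T)) (S i)) ->
  (forall i j, i != j -> Qmod2 (A + diag_mx d - sigma *: (v *m v^T)) (S i) (S j) < 0) ->
  (forall i, 0 < alpha i) ->
  (forall i, alpha i * Qmod (A + diag_mx d - sigma *: (v *m v^T)) (S i) >
     \sum_(j < k | j != i) alpha j * `|Qmod2 (A + diag_mx d - sigma *: (v *m v^T)) (S i) (S j)|) ->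
  at_least_pos_eigenvalues (A + diag_mx d - sigma *: (v *m v^T)) k.
Proof.
move=> [A_sym _ _] _ _ _ _ _ _ _ _ alpha_gt0 dominance.
set M := A + diag_mx d - sigma *: (v *m v^T).
have M_sym : M^T = M.
  by rewrite /M linearB linearD /= tr_diag_mx A_sym linearZ /= trmx_mul trmxK.
apply: (posdef_compression_pos_eigenvalues M_sym (E := charmx R S)).
apply: (weighted_dominant_posdefmx _ alpha_gt0).
  by rewrite !trmx_mul trmxK M_sym mulmxA.
move=> i; rewrite subr_gt0 charmx_compressionE.
by under eq_bigr do rewrite charmx_compressionE; apply: dominance.
Qed.
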